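(* For any hypergraph $H$ and any $a>0$ there exist $b>0$ and $n_0>0$ such that every hypergraph $G$ on $n>n_0$ vertices with $R(G)=R(H)$ and $h_n(G)>\pi(H)+a$ contains at least $b\binom{n}{v(H)}$ copies of $H$.
   Context: A hypergraph $H=(V,E)$ has finite vertex set $V$ and edge set $E\subseteq 2^V$; $R(H)=\{|F|:F\in E\}$ is its set of edge types and $v(H)=|V|$. $H_1$ is a subgraph of $H_2$ if there is an injective $f\colon V(H_1)\to V(H_2)$ with $f(F)\in E(H_2)$ for all $F\in E(H_1)$; a copy of $H$ in $G$ is the image of such an embedding. For $G$ on $n$ vertices, $h_n(G)=\sum_{F\in E(G)}1/\binom{n}{|F|}$. $\pi_n(H)=\max\{h_n(G): G \text{ on } n \text{ vertices}, R(G)\subseteq R(H), H\not\subseteq G\}$ and $\pi(H)=\lim_{n\to\infty}\pi_n(H)$ (the limit exists). *)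

From HB Require Import structures.
From mathcomp Require Import all_boot all_order all_algebra.
From mathcomp Require Import all_classical all_reals all_analysis.
Set Implicit Arguments. Unset Strict Implicit. Unset Printing Implicit Defensive.
Import Order.TTheory GRing.Theory Num.Theory.
Import numFieldNormedType.Exports.
Local Open Scope ring_scope.

(* A hypergraph on the vertex set 'I_n is given by its edge set
   E : {set {set 'I_n}} (E a subset of 2^V; edges of any size, including 0). *)

Definition edge_types (n : nat) (E : {set {set 'I_n}}) : pred nat :=
  fun m => [exists F in E, #|F| == m].

Definition types_sub (n k : nat) (EG : {set {set 'I_n}}) (EH : {set {set 'I_k}})
  : bool := [forall F in EG, [exists F' in EH, #|F'| == #|F|]].

Definition is_embedding (k n : nat) (EH : {set {set 'I_k}}) (EG : {set {set 'I_n}})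
  (f : {ffun 'I_k -> 'I_n}) : bool :=
  injectiveb f && [forall F in EH, (f @: F) \in EG].

Definition subgraph (k n : nat) (EH : {set {set 'I_k}}) (EG : {set {set 'I_n}})
  : bool := [exists f, is_embedding EH EG f].

Definition copy_of (k n : nat) (EH : {set {set 'I_k}}) (f : {ffun 'I_k -> 'I_n})
  : {set 'I_n} * {set {set 'I_n}} :=
  (f @: [set: 'I_k], [set (f @: F) | F : {set 'I_k} in EH]).

Definition copies (k n : nat) (EH : {set {set 'I_k}}) (EG : {set {set 'I_n}})
  : {set {set 'I_n} * {set {set 'I_n}}} :=
  [set c | [exists f, is_embedding EH EG f && (c == copy_of EH f)]].

Definition hn (R : realType) (n : nat) (EG : {set {set 'I_n}}) : R :=
  \sum_(F in EG) ('C(n, #|F|)%:R)^-1.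

(* pi_n(H) = max { h_n(G) : G on n vertices, R(G) ⊆ R(H), H not ⊆ G }
   (h_n >= 0, so taking the max with 0 changes nothing when the family is
   nonempty; it is 0 for an empty family). *)
Definition pin (R : realType) (k : nat) (EH : {set {set 'I_k}}) (n : nat) : R :=
  \big[Num.max/0]_(EG : {set {set 'I_n}} | types_sub EG EH && ~~ subgraph EH EG)
     hn R EG.

Definition piH (R : realType) (k : nat) (EH : {set {set 'I_k}}) : R :=
  limn (pin R EH).

From HB Require Import structures.
From mathcomp Require Import all_boot all_order all_algebra.
From mathcomp Require Import all_classical all_reals all_analysis.
From mathcomp Require Import ring lra zify.
Import Order.TTheory GRing.Theory Num.Theory.
Import numFieldNormedType.Exports.
Set Implicit Arguments. Unset Strict Implicit. Unset Printing Implicit Defensive.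

(* Averaging over the m-subsets S of the vertices: each edge F lies in the
   same proportion of them, so h_n(G) is the mean of h_m(G[S]).  When G[S]
   contains no copy of H, relabelling S as {0..m-1} shows h_m(G[S]) <= pi_m(H);
   in particular pi_n(H) is nonincreasing for n >= v(H) = k, hence converges,
   and we may fix m with pi_m(H) < pi(H) + a/2.  As always h_m(G[S]) <= 2^m,
   h_n(G) > pi(H) + a forces at least a C(n,m) / 2^(m+1) of the m-sets to
   contain a copy of H.  The vertex set of a copy lies in only C(n-k, m-k)
   m-sets, so there are at least
   a C(n,m) / (2^(m+1) C(n-k,m-k)) = a C(n,k) / (2^(m+1) C(m,k)) copies. *)

Lemma mul_bin_chain n m r : r <= m <= n ->
  'C(n, r) * 'C(n - r, m - r) = 'C(n, m) * 'C(m, r).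
Proof.
case/andP=> rm mn.
(* Multiplied by r`! * (m - r)`! * (n - m)`!, both sides become n`!. *)
have facts_gt0 : 0 < r`! * (m - r)`! * (n - m)`! by rewrite !muln_gt0 !fact_gt0.
apply/eqP; rewrite -(eqn_pmul2r facts_gt0); apply/eqP.
have nrmr : n - r - (m - r) = n - m by lia.
have := @bin_fact (n - r) (m - r) (leq_sub2r r mn); rewrite nrmr => bin_nr.
have := bin_fact (leq_trans rm mn); have := bin_fact mn; have := bin_fact rm.
rewrite -bin_nr; lia.
Qed.

Lemma card_bigcup_le (I T : finType) (P : pred I) (A : I -> {set T}) :
  #|\bigcup_(i | P i) A i| <= \sum_(i | P i) #|A i|.
Proof.
elim/big_ind2: _ => [|p U q V leUp leVq|//]; first by rewrite cards0.
exact: leq_trans (leq_card_setU U V).1 (leq_add leUp leVq).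
Qed.

Lemma card_supersets (T : finType) (A : {set T}) m : #|A| <= m ->
  #|[set S : {set T} | (#|S| == m) && (A \subset S)]| = 'C(#|T| - #|A|, m - #|A|).
Proof.
move=> Am; rewrite -(cardsC A) addKn -cards_draws.
have -> : [set S : {set T} | (#|S| == m) && (A \subset S)] =
    [set B :|: A | B in [set B : {set T} | B \subset ~: A & #|B| == m - #|A|]].
  apply/setP => S; rewrite inE; apply/andP/imsetP => [[/eqP <- AS] | [B]].
    exists (S :\: A); last by rewrite finset.setUC -{1}(finset.setIidPr AS) finset.setID.
    by rewrite inE subsetDr cardsDS // eqxx.
  rewrite inE -finset.disjoints_subset => /andP[BA /eqP cardB] ->.
  rewrite finset.subsetUr cardsU (disjoint_setI0 BA) cards0 subn0 cardB subnK //.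
apply: card_in_imset => B C; rewrite !inE -!finset.disjoints_subset.
move=> /andP[BA _] /andP[CA _] /(congr1 (fun U => U :\: A)).
rewrite !finset.setDUl !finset.setDv !finset.setU0.
by rewrite (finset.setDidPl BA) (finset.setDidPl CA).
Qed.

Lemma imset_preimset (aT rT : finType) (f : aT -> rT) (B : {set rT}) :
  B \subset f @: [set: aT] -> f @: (f @^-1: B) = B.
Proof.
move=> B_im; apply/setP => y; apply/imsetP/idP => [[x] | yB].
  by rewrite inE => fxB ->.
have /imsetP[x _ eq_y] := fintype.subsetP B_im y yB.
by exists x; rewrite // inE -eq_y.
Qed.

Lemma imset_enum_val (T : finType) (A : {set T}) :
  [set @enum_val _ (mem A) i | i in [set: 'I_#|A|]] = A.
Proof.
apply/setP => x; apply/imsetP/idP => [[i _ ->] | xA]; first exact: enum_valP.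
by exists (enum_rank_in xA x); rewrite ?enum_rankK_in.
Qed.

Local Open Scope ring_scope.

Lemma sumr_draws_const (T : finType) (V : nmodType) m (x : V) :
  \sum_(S : {set T} | #|S| == m) x = x *+ 'C(#|T|, m).
Proof. by rewrite -card_draws cardsE -sumr_const. Qed.

(* h_{|S|}(G[S]), computed without relabelling S as 'I_|S|. *)
Definition hn_induced (R : realType) {n : nat} (EG : {set {set 'I_n}})
  (S : {set 'I_n}) : R :=
  \sum_(F in EG | F \subset S) ('C(#|S|, #|F|)%:R)^-1.

Lemma sum_hn_induced (R : realType) n m (EG : {set {set 'I_n}}) :
  (m <= n)%N -> (forall F, F \in EG -> #|F| <= m)%N ->
  \sum_(S : {set 'I_n} | #|S| == m) hn_induced R EG S = 'C(n, m)%:R * hn R EG.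
Proof.
move=> mn small_EG.
under eq_bigr => S /eqP cardS do rewrite /hn_induced cardS.
rewrite (exchange_big_dep (mem EG)) /=; last by move=> S F _ /andP[].
rewrite /hn mulr_sumr; apply: eq_bigr => F FG.
have Fm := small_EG F FG.
rewrite (eq_bigl (mem [set S : {set 'I_n} | (#|S| == m) && (F \subset S)]));
  last by move=> S; rewrite !inE FG.
rewrite sumr_const card_supersets // card_ord.
have binF_neq0 p : (#|F| <= p)%N -> ('C(p, #|F|)%:R : R) != 0.
  by move=> Fp; rewrite pnatr_eq0 -lt0n bin_gt0.
rewrite -[LHS]mulr_natr mulrC; apply/eqP.
rewrite eqr_div ?binF_neq0 ?(leq_trans Fm) //.
by rewrite -!natrM mulnC mul_bin_chain ?Fm.
Qed.

Lemma hn_induced_le_exp (R : realType) n (EG : {set {set 'I_n}}) (S : {set 'I_n}) :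
  hn_induced R EG S <= (2 ^ #|S|)%:R.
Proof.
apply: (@le_trans _ _ (\sum_(F in EG | F \subset S) (1 : R))).
  apply: ler_sum => F _; case: (posnP 'C(#|S|, #|F|)) => [->|bin_gt0].
    by rewrite invr0 ler01.
  by rewrite invf_le1 ?ltr0n // ler1n.
rewrite -card_powerset sumr_const ler_nat; apply: subset_leq_card.
by apply/fintype.subsetP => F; rewrite !inE => /andP[].
Qed.

Definition embeds_within {k n : nat} (EH : {set {set 'I_k}})
  (EG : {set {set 'I_n}}) (S : {set 'I_n}) : bool :=
  [exists f, is_embedding EH EG f && (f @: [set: 'I_k] \subset S)].

Lemma embeds_within_subgraph k n (EH : {set {set 'I_k}}) (EG : {set {set 'I_n}}) S :
  embeds_within EH EG S -> subgraph EH EG.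
Proof. by case/existsP=> f /andP[emb _]; apply/existsP; exists f. Qed.

Definition preim_graph {m n : nat} (g : 'I_m -> 'I_n) (EG : {set {set 'I_n}})
  : {set {set 'I_m}} := [set F : {set 'I_m} | g @: F \in EG].

Section Relabelling.

Variables (k m n : nat) (EH : {set {set 'I_k}}) (EG : {set {set 'I_n}}).
Variables (g : 'I_m -> 'I_n) (S : {set 'I_n}).
Hypotheses (g_inj : injective g) (im_g : g @: [set: 'I_m] = S).

Lemma types_sub_preim : types_sub EG EH -> types_sub (preim_graph g EG) EH.
Proof.
move=> /forallP sub; apply/forallP => F; apply/implyP; rewrite inE => gFG.
by move/implyP: (sub (g @: F)) => /(_ gFG); rewrite card_imset.
Qed.

Lemma subgraph_preim : subgraph EH (preim_graph g EG) -> embeds_within EH EG S.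
Proof.
case/existsP=> f /andP[/injectiveP f_inj /forallP f_edges].
apply/existsP; exists [ffun i => g (f i)]; apply/andP; split; last first.
  by rewrite -im_g; apply/fintype.subsetP => _ /imsetP[i _ ->]; rewrite ffunE imset_f.
apply/andP; split.
  by apply/injectiveP => i j; rewrite !ffunE => /g_inj /f_inj.
apply/forallP => F; apply/implyP => FH; move/implyP: (f_edges F) => /(_ FH).
by rewrite inE -imset_comp; congr (_ \in EG); apply: eq_imset => i; rewrite ffunE.
Qed.

Lemma hn_preim (R : realType) : hn R (preim_graph g EG) = hn_induced R EG S.
Proof.
have cardS : #|S| = m by rewrite -im_g card_imset // cardsT card_ord.
rewrite /hn_induced cardS.
rewrite (eq_bigl (mem [set g @: F | F : {set 'I_m} in preim_graph g EG])).
  rewrite big_imset /=; last by move=> F F' _ _; apply: imset_inj.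
  by apply: eq_bigr => F _; rewrite card_imset.
move=> F; apply/andP/imsetP => [[FG FS] | [F' F'G ->]].
  by exists (g @^-1: F); rewrite ?inE imset_preimset // im_g.
by rewrite inE in F'G; rewrite F'G -im_g imsetS ?subsetT.
Qed.

End Relabelling.

Section Density.

Variables (R : realType) (k : nat) (EH : {set {set 'I_k}}).

Lemma pin_ge0 n : 0 <= pin R EH n.
Proof. exact: bigmax_ge_id. Qed.

Lemma types_sub_card n (EG : {set {set 'I_n}}) F :
  types_sub EG EH -> F \in EG -> (#|F| <= k)%N.
Proof.
move/forallP => /(_ F) /implyP sub /sub /existsP[F' /andP[_ /eqP <-]].
by apply: leq_trans (max_card _) _; rewrite card_ord.
Qed.

Lemma hn_induced_le_pin n (EG : {set {set 'I_n}}) (S : {set 'I_n}) :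
  types_sub EG EH -> ~~ embeds_within EH EG S -> hn_induced R EG S <= pin R EH #|S|.
Proof.
move=> sub S_free.
have g_inj := @enum_val_inj _ (mem S); have im_g := imset_enum_val S.
rewrite -(hn_preim EG g_inj im_g); apply: le_bigmax_cond.
by rewrite types_sub_preim //= (contra (subgraph_preim g_inj im_g)).
Qed.

Lemma pin_antimono m n : (k <= m <= n)%N -> pin R EH n <= pin R EH m.
Proof.
case/andP=> km mn; apply: bigmax_le; first exact: pin_ge0.
move=> EG /andP[sub H_free].
have bin_gt0 : (0 : R) < 'C(n, m)%:R by rewrite ltr0n bin_gt0.
rewrite -(ler_pM2l bin_gt0) -sum_hn_induced //; last first.
  by move=> F FG; rewrite (leq_trans _ km) // (types_sub_card sub FG).
rewrite [leRHS]mulr_natl -[n in 'C(n, m)](card_ord n) -sumr_draws_const.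
apply: ler_sum => S /eqP <-.
by apply: hn_induced_le_pin; rewrite // (contra (@embeds_within_subgraph _ _ _ _ S)).
Qed.

Lemma pin_cvg : (pin R EH @ \oo --> piH R EH)%classic.
Proof.
have : cvgn (fun n => pin R EH (n + k)).
  apply: nonincreasing_is_cvgn => [p q pq | ].
    by rewrite pin_antimono ?leq_addl ?leq_add2r.
  by exists 0 => _ [n _ <-]; exact: pin_ge0.
rewrite cvg_shiftn => pin_cvg_lim.
by rewrite /piH (cvg_lim _ pin_cvg_lim).
Qed.

Lemma exists_pin_lt (e : R) : 0 < e ->
  exists m, (k < m)%N /\ pin R EH m < piH R EH + e.
Proof.
move=> e_gt0; near \oo%classic => m.
exists m; split; first by near: m; exact: nbhs_infty_gt.
have : `|piH R EH - pin R EH m| < e.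
  by near: m; move/cvgrPdist_lt: pin_cvg => /(_ e e_gt0).
by rewrite distrC ltr_distl => /andP[].
Unshelve. all: by end_near.
Qed.

End Density.

Lemma types_sub_edge_types k n (EH : {set {set 'I_k}}) (EG : {set {set 'I_n}}) :
  edge_types EG =i edge_types EH -> types_sub EG EH.
Proof.
move=> same_types; apply/forallP => F; apply/implyP => FG.
have := same_types #|F|; rewrite !unfold_in /edge_types => <-.
by apply/existsP; exists F; rewrite FG eqxx.
Qed.

Section Copies.

Variables (k n : nat) (EH : {set {set 'I_k}}) (EG : {set {set 'I_n}}).

Definition host_sets (m : nat) : {set {set 'I_n}} :=
  [set S : {set 'I_n} | (#|S| == m) && embeds_within EH EG S].

Lemma card_copy_vertices c : c \in copies EH EG -> #|c.1| = k.
Proof.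
rewrite inE => /existsP[f /andP[/andP[/injectiveP f_inj _] /eqP ->]].
by rewrite card_imset // cardsT card_ord.
Qed.

Lemma host_sets_sub m : host_sets m \subset
  \bigcup_(c in copies EH EG) [set S : {set 'I_n} | (#|S| == m) && (c.1 \subset S)].
Proof.
apply/fintype.subsetP => S; rewrite inE => /andP[cardS /existsP[f /andP[emb fS]]].
apply/bigcupP; exists (copy_of EH f); last by rewrite inE cardS.
by rewrite inE; apply/existsP; exists f; rewrite emb eqxx.
Qed.

Lemma card_host_sets m : (k <= m)%N ->
  (#|host_sets m| <= #|copies EH EG| * 'C(n - k, m - k))%N.
Proof.
move=> km; apply: leq_trans (subset_leq_card (host_sets_sub m)) _.
apply: leq_trans (card_bigcup_le _ _) _.
rewrite -sum_nat_const; apply: leq_sum => c c_copy.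
by rewrite card_supersets card_copy_vertices ?card_ord.
Qed.

Lemma sum_host_indicator (R : realType) m :
  \sum_(S : {set 'I_n} | #|S| == m) ((S \in host_sets m)%:R : R) = #|host_sets m|%:R.
Proof.
rewrite -natr_sum -big_mkcondr -sum1_card.
by congr _%:R; apply: eq_bigl => S; rewrite inE; case: (#|S| == m).
Qed.

End Copies.

Section Supersaturation.

Variables (R : realType) (k n : nat) (EH : {set {set 'I_k}}) (EG : {set {set 'I_n}}).
Hypothesis sub : types_sub EG EH.

Lemma hn_induced_le_pin_host m (S : {set 'I_n}) : #|S| = m ->
  hn_induced R EG S <= pin R EH m + (S \in host_sets EH EG m)%:R * (2 ^ m)%:R.
Proof.
move=> <-; rewrite inE eqxx /=; case: (boolP (embeds_within EH EG S)) => [_ | S_free].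
  by rewrite mul1r; have := pin_ge0 R EH #|S|; have := hn_induced_le_exp R EG S; lra.
by rewrite mul0r addr0 hn_induced_le_pin.
Qed.

Lemma hn_le_pin_add_hosts m : (k <= m <= n)%N ->
  'C(n, m)%:R * hn R EG <=
  'C(n, m)%:R * pin R EH m + #|host_sets EH EG m|%:R * (2 ^ m)%:R.
Proof.
case/andP=> km mn.
rewrite -sum_hn_induced //; last by move=> F FG; rewrite (leq_trans (types_sub_card sub FG)).
rewrite -sum_host_indicator mulr_suml -[n in 'C(n, m)](card_ord n) mulr_natl.
rewrite -sumr_draws_const -big_split /=.
by apply: ler_sum => S /eqP; apply: hn_induced_le_pin_host.
Qed.

End Supersaturation.

Theorem mainTheorem3 (R : realType) (k : nat) (EH : {set {set 'I_k}})
  (a : R) (ha : 0 < a) :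
  exists b : R, 0 < b /\
  exists n0 : nat, (0 < n0)%N /\
  forall (n : nat) (EG : {set {set 'I_n}}),
    (n0 < n)%N ->
    edge_types EG =i edge_types EH ->
    piH R EH + a < hn R EG ->
    b * ('C(n, k))%:R <= (#|copies EH EG|)%:R.
Proof.
have [m [km pin_m_lt]] := exists_pin_lt EH (divr_gt0 ha (ltr0Sn R 1)).
pose M : R := (2 ^ m)%:R.
have M_gt0 : 0 < M by rewrite ltr0n expn_gt0.
have binmk_gt0 : (0 : R) < 'C(m, k)%:R by rewrite ltr0n bin_gt0 ltnW.
exists (a / (2 * M * 'C(m, k)%:R)); split; first by rewrite !divr_gt0 ?mulr_gt0.
exists m; split=> [|n EG mn same_types hn_large]; first exact: leq_ltn_trans (leq0n k) km.
have kmn : (k <= m <= n)%N by rewrite (ltnW km) (ltnW mn).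
have dense := hn_le_pin_add_hosts R (types_sub_edge_types same_types) kmn.
have hosts : (#|host_sets EH EG m|%:R : R) <= #|copies EH EG|%:R * 'C(n - k, m - k)%:R.
  by rewrite -natrM ler_nat card_host_sets // ltnW.
have binnm_gt0 : (0 : R) < 'C(n, m)%:R by rewrite ltr0n bin_gt0 ltnW.
have binnkmk_gt0 : (0 : R) < 'C(n - k, m - k)%:R by rewrite ltr0n bin_gt0 leq_sub2r // ltnW.
have := congr1 (GRing.natmul (1 : R)) (mul_bin_chain kmn); rewrite !natrM => chain.
have gap : a / 2 <= hn R EG - pin R EH m by lra.
have gap_C := ler_wpM2l (ltW binnm_gt0) gap.
have hosts_M := ler_wpM2r (ltW M_gt0) hosts.
rewrite mulrAC ler_pdivrMr ?mulr_gt0 // -(ler_pM2r binnkmk_gt0) -[leLHS]mulrA chain.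
rewrite [leLHS](_ : _ = 'C(m, k)%:R * ('C(n, m)%:R * a)); last by ring.
rewrite [leRHS](_ : _ = 'C(m, k)%:R * (2 * (#|copies EH EG|%:R * 'C(n - k, m - k)%:R * M)));
  last by ring.
by rewrite ler_pM2l //; lra.
Qed.
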